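(* There is no trajectory $(x,y,z)(\eta_1)$ of system (S2) such that, for some $\eta_{1,*}\in\mathbb{R}$, $x(\eta_1)>0$, $z(\eta_1)>0$, $y(\eta_1)<0$ for all $\eta_1>\eta_{1,*}$, and $$z(\eta_1)\to\infty,\qquad \frac{z(\eta_1)}{x(\eta_1)}\to\infty,\qquad \frac{y(\eta_1)}{z(\eta_1)}\to0,\qquad \eta_1\to\infty$$ (i.e. no trajectory enters the critical point at infinity $Q_4$ from the region $\{x>0,z>0,y<0\}$).
   Context: Let $N\geq1$, $m>1$, $\sigma>0$, $p>m$, $L=\sigma(m-1)+2(p-1)$, $\alpha=(\sigma+2)/L$, $\beta=(p-m)/L$. Positive profiles $f$ solve $(f^m)''+\frac{N-1}{\xi}(f^m)'+\alpha f+\beta\xi f'-\xi^\sigma f^p=0$. Setting $x=\frac{\alpha}{m}\xi^2f^{1-m}$, $y=\xi f'/f$, $z=\frac1m\xi^{\sigma+2}f^{p-m}$, $\eta_1=\ln\xi$, $(x,y,z)$ solves the autonomous system (S2): $$\dot x=x(2-(m-1)y),\quad \dot y=-x-(N-2)y+z-my^2-\tfrac{p-m}{\sigma+2}xy,\quad \dot z=z(\sigma+2+(p-m)y).$$ *)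

From Stdlib Require Import Reals.
From Coquelicot Require Import Coquelicot.
Open Scope R_scope.

Definition S2_fx (m : R) (x y z : R) : R := x * (2 - (m - 1) * y).
Definition S2_fy (N : nat) (m sigma p : R) (x y z : R) : R :=
  - x - (INR N - 2) * y + z - m * y ^ 2 - (p - m) / (sigma + 2) * x * y.
Definition S2_fz (m sigma p : R) (x y z : R) : R :=
  z * (sigma + 2 + (p - m) * y).

Definition S2_trajectory_on (N : nat) (m sigma p : R) (t0 : R)
  (x y z : R -> R) : Prop :=
  forall t, t0 < t ->
    is_derive x t (S2_fx m (x t) (y t) (z t)) /\
    is_derive y t (S2_fy N m sigma p (x t) (y t) (z t)) /\
    is_derive z t (S2_fz m sigma p (x t) (y t) (z t)).

(* Put c := (sigma + 2) / (p - m), so that z' < 0 exactly when y < -c.  Since z -> +oo,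
   z' > 0 at arbitrarily late times, so y climbs above -c.  Once z is large and z > 2x,
   the y-equation gives y' >= z - x - O(1) >= 1 on the strip -c <= y < 0; hence the
   region y >= -c is never left again, and y grows at unit speed there until it becomes
   positive, contradicting y < 0. *)
From Stdlib Require Import Reals Lra Classical.
From Coquelicot Require Import Coquelicot.
Open Scope R_scope.

Lemma half_line_MVT (f f' : R -> R) (a t1 t2 : R) :
  (forall t, a < t -> is_derive f t (f' t)) -> a < t1 -> t1 < t2 ->
  exists xi, t1 < xi < t2 /\ f t2 - f t1 = f' xi * (t2 - t1).
Proof.
  intros Hd Ha Ht.
  destruct (MVT_cor2 f f' t1 t2 Ht) as [xi [Heq Hxi]].
  - intros u Hu. apply is_derive_Reals, Hd. lra.
  - exists xi; split; assumption.
Qed.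

Lemma is_derive_lt_near (f : R -> R) (s l b : R) :
  is_derive f s l -> f s < b ->
  exists d, 0 < d /\ forall u, Rabs (u - s) < d -> f u < b.
Proof.
  intros Hd Hb.
  assert (Hc : filterlim f (locally s) (locally (f s))).
  { apply continuity_pt_filterlim, derivable_continuous_pt.
    exists l. apply is_derive_Reals, Hd. }
  destruct (Hc (fun v => v < b) (open_lt b (f s) Hb)) as [d Hnear].
  exists d; split; [apply cond_pos | intros u Hu; exact (Hnear u Hu)].
Qed.

Lemma is_derive_pos_right (f : R -> R) (s l : R) :
  is_derive f s l -> 0 < l ->
  exists d, 0 < d /\ forall u, s < u < s + d -> f s < f u.
Proof.
  intros Hd Hl. apply is_derive_Reals in Hd.
  destruct (Hd l Hl) as [d Hq].
  exists d; split; [apply cond_pos | intros u Hu].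
  assert (Hh : u - s <> 0) by lra.
  assert (Hhd : Rabs (u - s) < d) by (rewrite Rabs_right; lra).
  specialize (Hq (u - s) Hh Hhd). replace (s + (u - s)) with u in Hq by ring.
  apply Rabs_def2 in Hq.
  assert (Hslope : 0 < (f u - f s) / (u - s) * (u - s))
    by (apply Rmult_lt_0_compat; lra).
  unfold Rdiv in Hslope. rewrite Rmult_assoc, Rinv_l in Hslope by exact Hh. lra.
Qed.

Lemma is_lim_p_infty_eventually_gt (f : R -> R) (M : R) :
  is_lim f p_infty p_infty -> Rbar_locally p_infty (fun t => M < f t).
Proof.
  intros Hf. apply Hf. exists M; auto.
Qed.

Lemma is_derive_lower_bound (f f' : R -> R) (a k t1 t2 : R) :
  (forall t, a < t -> is_derive f t (f' t)) -> (forall t, t1 < t < t2 -> k <= f' t) ->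
  a < t1 -> t1 < t2 -> f t1 + k * (t2 - t1) <= f t2.
Proof.
  intros Hd Hk Ha Ht.
  destruct (half_line_MVT f f' a t1 t2 Hd Ha Ht) as [xi [Hxi Heq]].
  assert (k * (t2 - t1) <= f' xi * (t2 - t1)) by (apply Rmult_le_compat_r; [| apply Hk]; lra).
  lra.
Qed.

Lemma is_lim_p_infty_derive_pos (f f' : R -> R) (a : R) :
  (forall t, a < t -> is_derive f t (f' t)) -> is_lim f p_infty p_infty ->
  forall T, exists t, T < t /\ 0 < f' t.
Proof.
  intros Hd Hf T. apply NNPP; intro Hnone.
  set (t1 := Rmax a T + 1).
  destruct (is_lim_p_infty_eventually_gt f (f t1) Hf) as [T' HT'].
  set (t2 := Rmax T' t1 + 1).
  assert (Ht : a < t1 /\ T < t1 /\ T' < t2 /\ t1 < t2).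
  { unfold t2, t1. pose proof (Rmax_l a T); pose proof (Rmax_r a T).
    pose proof (Rmax_l T' (Rmax a T + 1)); pose proof (Rmax_r T' (Rmax a T + 1)); lra. }
  destruct (half_line_MVT f f' a t1 t2 Hd ltac:(lra) ltac:(lra)) as [xi [Hxi Heq]].
  assert (Hxi' : f' xi <= 0) by (apply Rnot_lt_le; intro; apply Hnone; exists xi; split; lra).
  assert (f' xi * (t2 - t1) <= 0) by (apply Rmult_le_0_r; lra).
  specialize (HT' t2 ltac:(lra)). lra.
Qed.

(* With s the last time in [t1, t] where f >= b: continuity rules out f s < b, and
   f' s > 0 rules out f s >= b. *)
Lemma superlevel_set_forward_invariant (f f' : R -> R) (a b t1 : R) :
  (forall t, a < t -> is_derive f t (f' t)) ->
  (forall t, a < t -> b <= f t -> 0 < f' t) ->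
  a < t1 -> b <= f t1 -> forall t, t1 <= t -> b <= f t.
Proof.
  intros Hd Hpos Ha Hb1 t2 Ht2. apply Rnot_lt_le; intro Hb2.
  set (E := fun u => t1 <= u <= t2 /\ b <= f u).
  destruct (completeness E) as [s [Hub Hlub]].
  { exists t2. intros u [[_ Hu] _]. exact Hu. }
  { exists t1. split; [lra | exact Hb1]. }
  assert (Hs1 : t1 <= s) by (apply Hub; split; [lra | exact Hb1]).
  assert (Hs2 : s <= t2) by (apply Hlub; intros u [[_ Hu] _]; exact Hu).
  destruct (Rlt_or_le (f s) b) as [Hfs | Hfs].
  - destruct (is_derive_lt_near f s (f' s) b (Hd s ltac:(lra)) Hfs) as [d [Hd0 Hnear]].
    assert (Hub' : is_upper_bound E (s - d)).
    { intros e [He Hfe]. apply Rnot_lt_le; intro Hlt.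
      assert (e <= s) by (apply Hub; split; assumption).
      assert (f e < b) by (apply Hnear; rewrite Rabs_left1; lra). lra. }
    specialize (Hlub _ Hub'). lra.
  - assert (Hst : s < t2) by (destruct (Req_dec s t2); [subst; lra | lra]).
    destruct (is_derive_pos_right f s (f' s) (Hd s ltac:(lra)) (Hpos s ltac:(lra) Hfs))
      as [d [Hd0 Hright]].
    assert (Hh : 0 < Rmin d (t2 - s)) by (apply Rmin_glb_lt; lra).
    set (u := s + Rmin d (t2 - s) / 2).
    assert (Hu : s < u < s + d /\ u <= t2).
    { unfold u; pose proof (Rmin_l d (t2 - s)); pose proof (Rmin_r d (t2 - s)); lra. }
    assert (HEu : E u) by (split; [lra | pose proof (Hright u ltac:(lra)); lra]).
    specialize (Hub u HEu). lra.
Qed.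

Definition S2_ycrit (m sigma p : R) : R := - (sigma + 2) / (p - m).

Lemma S2_ycrit_neg (m sigma p : R) : m < p -> 0 < sigma + 2 -> S2_ycrit m sigma p < 0.
Proof.
  intros Hp Hs. unfold S2_ycrit, Rdiv. rewrite Ropp_mult_distr_l_reverse.
  apply Ropp_lt_gt_0_contravar, Rdiv_lt_0_compat; lra.
Qed.

Lemma S2_ycrit_lt_of_fz_pos (m sigma p x y z : R) :
  m < p -> 0 < z -> 0 < S2_fz m sigma p x y z -> S2_ycrit m sigma p < y.
Proof.
  unfold S2_fz, S2_ycrit. intros Hp Hz Hfz.
  assert (Hlin : 0 < sigma + 2 + (p - m) * y).
  { apply Rnot_le_lt; intro. assert (z * (sigma + 2 + (p - m) * y) <= 0) by nra. lra. }
  apply Rmult_lt_reg_r with (p - m); [lra |].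
  unfold Rdiv. rewrite Rmult_assoc, Rinv_l by lra. lra.
Qed.

(* On the strip [ycrit <= y < 0] the terms in y are bounded below by constants, and
   [- (p - m)/(sigma + 2) * x * y] is nonnegative; [z - x > z/2] does the rest. *)
Lemma S2_fy_ge_1 (N : nat) (m sigma p x y z : R) :
  0 <= m -> m < p -> 0 < sigma + 2 -> 0 < x ->
  S2_ycrit m sigma p <= y -> y < 0 -> 2 * x < z ->
  2 * ((Rabs (INR N - 2) - m * S2_ycrit m sigma p) * - S2_ycrit m sigma p + 1) < z ->
  1 <= S2_fy N m sigma p x y z.
Proof.
  intros Hm Hp Hs Hx Hy Hy0 Hxz Hz. unfold S2_fy.
  set (yc := S2_ycrit m sigma p) in *.
  assert (Hxy : 0 <= (p - m) / (sigma + 2) * x * - y).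
  { assert (0 < (p - m) / (sigma + 2)) by (apply Rdiv_lt_0_compat; lra).
    apply Rmult_le_pos; [apply Rmult_le_pos |]; lra. }
  assert (HNy : (INR N - 2) * y <= Rabs (INR N - 2) * - yc).
  { eapply Rle_trans; [apply Rle_abs |]. rewrite Rabs_mult, (Rabs_left y) by lra.
    apply Rmult_le_compat_l; [apply Rabs_pos | lra]. }
  assert (Hmy : m * y ^ 2 <= m * yc * yc).
  { rewrite Rmult_assoc; apply Rmult_le_compat_l; [lra | nra]. }
  lra.
Qed.

Theorem lemma2p8 (N : nat) (m sigma p : R) :
  (1 <= N)%nat -> 1 < m -> 0 < sigma -> m < p ->
  ~ (exists (t0 eta_star : R) (x y z : R -> R),
        S2_trajectory_on N m sigma p t0 x y z /\
        t0 <= eta_star /\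
        (forall t, eta_star < t -> 0 < x t /\ 0 < z t /\ y t < 0) /\
        is_lim z p_infty p_infty /\
        is_lim (fun t => z t / x t) p_infty p_infty /\
        is_lim (fun t => y t / z t) p_infty 0).
Proof.
  intros _ Hm Hs Hp [t0 [es [x [y [z [Htr [Hes [Hsign [Hz [Hzx _]]]]]]]]]].
  set (yc := S2_ycrit m sigma p).
  set (fy := fun t => S2_fy N m sigma p (x t) (y t) (z t)).
  assert (Hyc : yc < 0) by (apply S2_ycrit_neg; lra).
  assert (Hlate : Rbar_locally p_infty (fun t =>
    (es < t /\ 2 * ((Rabs (INR N - 2) - m * yc) * - yc + 1) < z t) /\ 2 < z t / x t)).
  { repeat apply filter_and; [exists es; auto | |]; apply is_lim_p_infty_eventually_gt;
      assumption. }
  destruct Hlate as [T HT].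
  assert (Hdy : forall t, T < t -> is_derive y t (fy t))
    by (intros t Ht; apply Htr; destruct (HT t Ht) as [[? _] _]; lra).
  assert (Hfy : forall t, T < t -> yc <= y t -> 1 <= fy t).
  { intros t Ht Hyt. destruct (HT t Ht) as [[Hest Hzt] Hzxt].
    destruct (Hsign t Hest) as [Hx [_ Hy]].
    apply S2_fy_ge_1; try assumption; try lra.
    apply (Rlt_div_r 2 (z t) (x t) Hx), Hzxt. }
  destruct (is_lim_p_infty_derive_pos z (fun t => S2_fz m sigma p (x t) (y t) (z t)) t0
     ltac:(intros t Ht; apply Htr, Ht) Hz T) as [t1 [Ht1 Hfz]].
  assert (Hy1 : yc < y t1).
  { apply (S2_ycrit_lt_of_fz_pos m sigma p (x t1) (y t1) (z t1) Hp); [| exact Hfz].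
    apply Hsign; destruct (HT t1 Ht1) as [[? _] _]; lra. }
  assert (Hinv : forall t, t1 <= t -> yc <= y t).
  { apply (superlevel_set_forward_invariant y fy T); [exact Hdy | | lra | lra].
    intros t Ht Hyt. pose proof (Hfy t Ht Hyt). lra. }
  pose proof (is_derive_lower_bound y fy T 1 t1 (t1 - yc + 1) Hdy
    ltac:(intros t Ht; apply Hfy; [| apply Hinv]; lra) Ht1 ltac:(lra)) as Hgrowth.
  destruct (HT (t1 - yc + 1) ltac:(lra)) as [[Hest _] _].
  destruct (Hsign _ Hest) as [_ [_ Hy2]].
  lra.
Qed.
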